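(* $R_3(VS)\le 68$: every 3-coloring of $[68]$ contains two integers $a<b$ in $[68]$ of the same color with $b-a$ a positive perfect square.
   Context: For $n\in\mathbb{N}$, $[n]=\{1,\dots,n\}$; a $c$-coloring of $[n]$ is a function $[n]\to[c]$. $R_c(VS)$ (the van der Square number) is the least positive integer $n$ such that every $c$-coloring of $[n]$ contains integers $a<b$ in $[n]$ of the same color with $b-a=x^2$ for some positive integer $x$. *)

From mathcomp Require Import all_boot.
Set Implicit Arguments. Unset Strict Implicit. Unset Printing Implicit Defensive.

(* A c-coloring of [n] = {1,...,n} is modelled as a function 'I_n -> 'I_c,
   where the ordinal i : 'I_n represents the integer i+1 in [n]. *)

Definition vds_mono (n c : nat) (chi : 'I_n -> 'I_c) : Prop :=
  exists (a b : 'I_n), (a < b)%N /\ chi a = chi b /\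
    exists x : nat, (0 < x)%N /\ (b : nat) - a = x ^ 2.

Definition vds_property (n c : nat) : Prop :=
  forall chi : 'I_n -> 'I_c, vds_mono chi.

(* Backtracking: colour 1, 2, 3, ... one integer at a time, keeping only
   colourings without a monochromatic pair at square distance.  Every branch
   of this search dies before reaching length 58, so already [58] has the van
   der Square property for 3 colours, and the property passes to larger n. *)

From mathcomp Require Import all_boot.

Set Implicit Arguments.
Unset Strict Implicit.
Unset Printing Implicit Defensive.

Section DifferenceSearch.

Variables (c : nat) (D : seq nat).
Hypothesis D_gt0 : forall d, d \in D -> 0 < d.

(* Colourings are sequences of colours in [0, c); the next colour [col] is
   admissible if it differs from the colour at every distance [d \in D]. *)
Definition admissible (l : seq nat) (col : nat) : bool :=
  all (fun d => (d <= size l) ==> (nth 0 l (size l - d) != col)) D.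

(* The [if] (rather than [&&]) keeps [vm_compute] from exploring the
   recursive call on inadmissible branches. *)
Fixpoint extendable (f : nat) (l : seq nat) : bool :=
  if f is f'.+1 then
    has (fun col => if admissible l col then extendable f' (rcons l col) else false)
        (iota 0 c)
  else true.

Lemma mono_diff_of_not_extendable (s : seq nat) (k f : nat) :
    all (gtn c) s -> k + f = size s -> ~~ extendable f (take k s) ->
  exists i j, [/\ i < j < size s, nth 0 s i = nth 0 s j & j - i \in D].
Proof.
move=> s_lt_c; elim: f k => [|f IH] k //= size_s /hasPn no_col.
have k_lt_s : k < size s by rewrite -size_s addnS ltnS leq_addr.
have col_lt_c : nth 0 s k < c by apply: (allP s_lt_c); rewrite mem_nth.
have := no_col (nth 0 s k); rewrite mem_iota col_lt_c => /(_ isT).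
case: ifP => [_|/allPn [d d_in]].
  by rewrite -take_nth //; apply: IH; rewrite addSnnS.
have d_gt0 := D_gt0 d_in.
rewrite size_take k_lt_s negb_imply negbK => /andP [d_le_k /eqP same_col].
have lt_kd_k : k - d < k by rewrite ltn_subrL d_gt0 (leq_trans d_gt0 d_le_k).
by exists (k - d), k; rewrite subKn // lt_kd_k k_lt_s -same_col nth_take.
Qed.

End DifferenceSearch.

Definition squares_below (n : nat) : seq nat := [seq x ^ 2 | x <- iota 1 n & x ^ 2 < n].

Lemma vds_property_of_search (n c : nat) :
  ~~ extendable c (squares_below n) n [::] -> vds_property n c.
Proof.
move=> no_ext chi; set s := [seq val (chi i) | i <- enum 'I_n].
have size_s : size s = n by rewrite size_map size_enum_ord.
have s_lt_c : all (gtn c) s by apply/allP => _ /mapP [i _ ->]; exact: ltn_ord.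
have sq_gt0 d : d \in squares_below n -> 0 < d.
  by case/mapP => x; rewrite mem_filter mem_iota => /andP [_ /andP [x_gt0 _]] ->;
     rewrite expn_gt0 x_gt0.
have := mono_diff_of_not_extendable sq_gt0 (k := 0) s_lt_c (esym size_s).
rewrite take0 => /(_ no_ext) [i [j [/andP [lt_ij j_lt_s] same_col sq_diff]]].
rewrite size_s in j_lt_s.
have i_lt_n := ltn_trans lt_ij j_lt_s.
have nth_s (a : 'I_n) : nth 0 s a = val (chi a).
  by rewrite (nth_map a) ?nth_ord_enum // size_enum_ord.
exists (Ordinal i_lt_n), (Ordinal j_lt_s); split=> //; split.
  by apply: val_inj; rewrite /= -(nth_s (Ordinal i_lt_n)) -(nth_s (Ordinal j_lt_s)).
by case/mapP: sq_diff => x; rewrite mem_filter mem_iota => /andP [_ /andP [x_gt0 _]] ->;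
   exists x.
Qed.

Lemma vds_property_widen (n m c : nat) :
  n <= m -> vds_property n c -> vds_property m c.
Proof.
move=> le_nm vds_n chi.
have [a [b mono_ab]] := vds_n (fun i => chi (widen_ord le_nm i)).
by exists (widen_ord le_nm a), (widen_ord le_nm b).
Qed.

Lemma vds_property_58_3 : vds_property 58 3.
Proof. by apply: vds_property_of_search; vm_compute. Qed.

Theorem theorem4p3 : vds_property 68 3.
Proof. exact: vds_property_widen vds_property_58_3. Qed.
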